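(* Let $p$ be any of the following patterns, or any pattern in the same symmetry class as one of them: $(123,\{0,1,2\},\{0,1,2\})$, $(123,\{0,1,2\},\{0,1,3\})$, $(123,\{0,1,2\},\{0,2,3\})$, $(123,\{0,1,2\},\{1,2,3\})$, $(123,\{0,1,3\},\{0,1,3\})$, $(123,\{0,1,3\},\{0,2,3\})$, $(132,\{0,1,2\},\{0,1,2\})$, $(132,\{0,1,2\},\{0,1,3\})$, $(132,\{0,1,2\},\{0,2,3\})$, $(132,\{0,1,2\},\{1,2,3\})$, $(132,\{0,1,3\},\{0,1,3\})$, $(132,\{0,1,3\},\{0,2,3\})$, $(132,\{0,1,3\},\{1,2,3\})$, $(132,\{0,2,3\},\{0,2,3\})$, $(132,\{0,2,3\},\{1,2,3\})$, $(132,\{1,2,3\},\{1,2,3\})$. Then for all $n\ge3$, $a_n(p)=n!-(n-3)!$.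
   Context: For $n\ge1$, $\mathcal S_n$ is the set of permutations $\pi=\pi_1\cdots\pi_n$ of $[n]$. A bi-vincular pattern of length $k$ is a triple $p=(\sigma,X,Y)$ with $\sigma\in\mathcal S_k$ and $X,Y\subseteq\{0,1,\dots,k\}$. A permutation $\pi\in\mathcal S_n$ contains $p$ if there are indices $1\le i_1<\dots<i_k\le n$ such that $(\pi_{i_1},\dots,\pi_{i_k})$ is order-isomorphic to $\sigma$ and, letting $j_1<\dots<j_k$ be the values $\pi_{i_1},\dots,\pi_{i_k}$ sorted increasingly and setting $i_0=j_0=0$, $i_{k+1}=j_{k+1}=n+1$, one has $i_{x+1}=i_x+1$ for all $x\in X$ and $j_{y+1}=j_y+1$ for all $y\in Y$. Otherwise $\pi$ avoids $p$; $a_n(p)$ is the number of $\pi\in\mathcal S_n$ avoiding $p$. Symmetries: $p^{i}=(\sigma^{-1},Y,X)$, $p^{r}=(\sigma^{r},\{k-x:x\in X\},Y)$, $p^{c}=(\sigma^{c},X,\{k-y:y\in Y\})$ with $\sigma^r_j=\sigma_{k+1-j}$, $\sigma^c_j=k+1-\sigma_j$; the symmetry class of $p$ consists of all patterns obtained from $p$ by finitely many applications of these maps. *)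

From mathcomp Require Import all_boot all_fingroup.
Set Implicit Arguments. Unset Strict Implicit. Unset Printing Implicit Defensive.

(* Permutations of [n] are represented by 'S_n (values 0..n-1 instead of 1..n;
   everything below is shifted to 1-based positions/values where the paper's
   boundary conventions i_0 = j_0 = 0, i_{k+1} = j_{k+1} = n+1 matter). *)

Record bvpat (k : nat) := BVPat {
  bv_sigma : 'S_k;
  bv_X : {set 'I_k.+1};
  bv_Y : {set 'I_k.+1} }.

(* 1-based positions i_0 = 0 < i_1 < ... < i_k, and i_{k+1} = n+1,
   of the occurrence selected by f *)
Definition ipos (k n : nat) (f : {ffun 'I_k -> 'I_n}) (x : nat) : nat :=
  nth n.+1 (0 :: [seq (val (f a)).+1 | a <- enum 'I_k]) x.
(* 1-based values j_0 = 0, j_1 < ... < j_k (the values pi_{i_1},...,pi_{i_k}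
   sorted increasingly), and j_{k+1} = n+1 *)
Definition jval (k n : nat) (pi : 'S_n) (f : {ffun 'I_k -> 'I_n}) (y : nat) : nat :=
  nth n.+1 (0 :: sort leq [seq (val (pi (f a))).+1 | a <- enum 'I_k]) y.

Definition contains (k n : nat) (p : bvpat k) (pi : 'S_n) : bool :=
  [exists f : {ffun 'I_k -> 'I_n},
    [&& [forall a : 'I_k, forall b : 'I_k, (a < b) ==> (f a < f b)],
        [forall a : 'I_k, forall b : 'I_k,
           (pi (f a) < pi (f b)) == (bv_sigma p a < bv_sigma p b)],
        [forall x in bv_X p, ipos f (val x).+1 == (ipos f (val x)).+1] &
        [forall y in bv_Y p, jval pi f (val y).+1 == (jval pi f (val y)).+1]]].

Definition avoiders (k n : nat) (p : bvpat k) : nat :=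
  #|[set pi : 'S_n | ~~ contains p pi]|.

Lemma rev_perm_inj k (s : 'S_k) : injective (fun j : 'I_k => s (rev_ord j)).
Proof. by move=> i j H; apply: rev_ord_inj; apply: (@perm_inj _ s). Qed.
Lemma compl_perm_inj k (s : 'S_k) : injective (fun j : 'I_k => rev_ord (s j)).
Proof. by move=> i j H; apply: (@perm_inj _ s); apply: rev_ord_inj. Qed.

Definition perm_rev k (s : 'S_k) : 'S_k := perm (@rev_perm_inj k s).
Definition perm_compl k (s : 'S_k) : 'S_k := perm (@compl_perm_inj k s).

Definition pat_inv k (p : bvpat k) : bvpat k :=
  BVPat (bv_sigma p)^-1 (bv_Y p) (bv_X p).
Definition pat_rev k (p : bvpat k) : bvpat k :=
  BVPat (perm_rev (bv_sigma p)) [set rev_ord x | x in bv_X p] (bv_Y p).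
Definition pat_compl k (p : bvpat k) : bvpat k :=
  BVPat (perm_compl (bv_sigma p)) (bv_X p) [set rev_ord y | y in bv_Y p].

Inductive sym_class k (p : bvpat k) : bvpat k -> Prop :=
  | sym_refl : sym_class p p
  | sym_inv q : sym_class p q -> sym_class p (pat_inv q)
  | sym_rev q : sym_class p q -> sym_class p (pat_rev q)
  | sym_compl q : sym_class p q -> sym_class p (pat_compl q).

Definition p123 : 'S_3 := 1%g.
Definition p132 : 'S_3 := tperm (inord 1) (inord 2).
Definition mkpat3 (s : 'S_3) (X Y : seq nat) : bvpat 3 :=
  BVPat s [set x : 'I_4 | val x \in X] [set y : 'I_4 | val y \in Y].

Definition listed_patterns : seq (bvpat 3) :=
  [:: mkpat3 p123 [:: 0; 1; 2] [:: 0; 1; 2];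
      mkpat3 p123 [:: 0; 1; 2] [:: 0; 1; 3];
      mkpat3 p123 [:: 0; 1; 2] [:: 0; 2; 3];
      mkpat3 p123 [:: 0; 1; 2] [:: 1; 2; 3];
      mkpat3 p123 [:: 0; 1; 3] [:: 0; 1; 3];
      mkpat3 p123 [:: 0; 1; 3] [:: 0; 2; 3];
      mkpat3 p132 [:: 0; 1; 2] [:: 0; 1; 2];
      mkpat3 p132 [:: 0; 1; 2] [:: 0; 1; 3];
      mkpat3 p132 [:: 0; 1; 2] [:: 0; 2; 3];
      mkpat3 p132 [:: 0; 1; 2] [:: 1; 2; 3];
      mkpat3 p132 [:: 0; 1; 3] [:: 0; 1; 3];
      mkpat3 p132 [:: 0; 1; 3] [:: 0; 2; 3];
      mkpat3 p132 [:: 0; 1; 3] [:: 1; 2; 3];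
      mkpat3 p132 [:: 0; 2; 3] [:: 0; 2; 3];
      mkpat3 p132 [:: 0; 2; 3] [:: 1; 2; 3];
      mkpat3 p132 [:: 1; 2; 3] [:: 1; 2; 3]].

From mathcomp Require Import all_boot all_fingroup alt primitive_action zify.
Set Implicit Arguments. Unset Strict Implicit. Unset Printing Implicit Defensive.

(* If |X| = |Y| = k, then in an occurrence all but one of the k+1 gaps
   i_{x+1} - i_x (with i_0 = 0, i_{k+1} = n+1) equal 1, so the positions of the
   occurrence are forced: an initial block and a final block.  The same holds
   for its values.  Hence pi contains p iff pi sends k fixed positions to k
   fixed values, which (n-k)! permutations do.  The listed patterns all have
   |X| = |Y| = 3, and the symmetries i, r, c preserve this. *)

(* The 0-based position (or value) of the a-th entry of an occurrence whose
   only unconstrained gap is the m-th one. *)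
Definition pinned (k n m a : nat) : nat := if a < m then a else a + (n - k).

Lemma pinned_mono k n m : {mono pinned k n m : a b / a < b}.
Proof.
move=> a b; rewrite /pinned; case: (ltnP a m) => am; case: (ltnP b m) => bm //.
- by rewrite ltn_addr ?(leq_trans am bm).
- have ba : b <= a := ltnW (leq_trans bm am).
  by rewrite ltnNge (leq_trans ba (leq_addr _ _)) ltnNge ba.
- by rewrite ltn_add2r.
Qed.

Lemma pinned_leq k n m : {mono pinned k n m : a b / a <= b}.
Proof. by move=> a b; rewrite leqNgt pinned_mono -leqNgt. Qed.

Lemma pinned_ltn k n m a : a < k -> k <= n -> pinned k n m a < n.
Proof. by rewrite /pinned; case: ifP => _; lia. Qed.

Lemma succ_chain_pinned k n m (L : nat -> nat) :
  k <= n -> m <= k -> L 0 = 0 -> L k.+1 = n.+1 ->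
  (forall x, x <= k -> x != m -> L x.+1 = (L x).+1) <->
  (forall a, a < k -> L a.+1 = (pinned k n m a).+1).
Proof.
move=> kn mk L0 Lk; rewrite /pinned; split=> [succL | pinL].
- have low x : x <= m -> L x = x.
    elim: x => [|x IH] hx //; rewrite succL ?IH //; lia.
  have high d : d <= k - m -> L (k.+1 - d) = k.+1 - d + (n - k).
    elim: d => [|d IH] hd; first by rewrite subn0 Lk; lia.
    have := succL (k - d) ltac:(lia) ltac:(lia).
    rewrite subSS (_ : (k - d).+1 = k.+1 - d) ?IH; lia.
  move=> a ak; case: ifP => am; first by rewrite low.
  by have := high (k - a) ltac:(lia); rewrite (_ : k.+1 - (k - a) = a.+1); lia.
- have shape x : x <= k.+1 -> L x = if x <= m then x else x + (n - k).
    case: x => [_|a ha]; first by rewrite L0.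
    have [ak|->] : a < k \/ a = k by lia.
    + by rewrite pinL //; case: ifP => _; lia.
    + by rewrite Lk ltnNge mk /=; lia.
  move=> x xk xm; rewrite !shape ?(leqW xk) // ltn_neqAle xm /=.
  by case: ifP => _; rewrite ?addSn.
Qed.

Lemma sort_order_iso k (s : 'S_k) (w : 'I_k -> nat) :
  (forall a b, (w a < w b) = (s a < s b)) ->
  sort leq [seq w a | a <- enum 'I_k] = [seq w (s^-1 b)%g | b <- enum 'I_k].
Proof.
move=> iso; apply: (sorted_eq leq_trans anti_leq).
- exact: (sort_sorted leq_total).
- have ord_sorted : sorted (relpre val ltn) (enum 'I_k).
    by rewrite -sorted_map val_enum_ord iota_ltn_sorted.
  rewrite sorted_map; apply: sub_sorted ord_sorted => b c /= bc.
  by rewrite ltnW // iso !permKV.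
- rewrite perm_sort (map_comp w (fun b => s^-1 b)%g); apply: perm_map.
  apply: uniq_perm; first exact: enum_uniq.
  + by rewrite map_inj_uniq ?enum_uniq //; apply: perm_inj.
  + move=> a; rewrite mem_enum; apply/esym/mapP.
    by exists (s a); rewrite ?mem_enum ?permK.
Qed.

Section Occurrences.
Variables (k n : nat) (f : {ffun 'I_k -> 'I_n}).

Lemma ipos0 : ipos f 0 = 0. Proof. by []. Qed.

Lemma ipos_last : ipos f k.+1 = n.+1.
Proof. by rewrite /ipos /= nth_default // size_map size_enum_ord. Qed.

Lemma ipos_succ (a : 'I_k) : ipos f a.+1 = (f a).+1.
Proof. by rewrite /ipos /= (nth_map a) ?size_enum_ord // nth_ord_enum. Qed.

Variables (pi : 'S_n) (s : 'S_k).
Hypothesis iso : forall a b, (pi (f a) < pi (f b)) = (s a < s b).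

Lemma jval0 : jval pi f 0 = 0. Proof. by []. Qed.

Lemma jval_last : jval pi f k.+1 = n.+1.
Proof. by rewrite /jval /= nth_default // size_sort size_map size_enum_ord. Qed.

Lemma jval_succ (b : 'I_k) : jval pi f b.+1 = (pi (f (s^-1 b)%g)).+1.
Proof.
rewrite /jval /= (@sort_order_iso _ s (fun a => (pi (f a)).+1)) => [|a c].
  by rewrite (nth_map b) ?size_enum_ord // nth_ord_enum.
by rewrite ltnS iso.
Qed.

End Occurrences.

Lemma forall_setC1P k (m : 'I_k.+1) (L : nat -> nat) :
  reflect (forall x, x <= k -> x != m -> L x.+1 = (L x).+1)
          [forall x in [set~ m], L (val x).+1 == (L (val x)).+1].
Proof.
apply: (iffP forall_inP) => succL x.
- move=> xk xm; apply/eqP; apply: (succL (Ordinal (xk : x < k.+1))).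
  by rewrite in_setC1 -(inj_eq val_inj).
- rewrite in_setC1 -(inj_eq val_inj) => xm; apply/eqP/succL => //.
  by rewrite -ltnS; apply: ltn_ord.
Qed.

Section Pinned.
Variables (k n : nat).
Hypothesis kn : k <= n.

Definition pinnedI (m : nat) (a : 'I_k) : 'I_n :=
  Ordinal (pinned_ltn m (ltn_ord a) kn).

Lemma pinnedI_mono m : {mono pinnedI m : a b / a < b}.
Proof. exact: pinned_mono. Qed.

Lemma pinnedI_inj m : injective (pinnedI m).
Proof. by move=> a b /(congr1 val)/(incn_inj (pinned_leq k n m))/val_inj. Qed.

Lemma adjacent_but_pinnedP (m : 'I_k.+1) (L : nat -> nat) :
  L 0 = 0 -> L k.+1 = n.+1 ->
  reflect (forall a, a < k -> L a.+1 = (pinned k n m a).+1)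
          [forall x in [set~ m], L (val x).+1 == (L (val x)).+1].
Proof.
move=> L0 Lk; have mk : m <= k by rewrite -ltnS.
exact: equivP (forall_setC1P m L) (succ_chain_pinned kn mk L0 Lk).
Qed.

Lemma ipos_pinnedP (f : {ffun 'I_k -> 'I_n}) (m : 'I_k.+1) :
  reflect (forall a, f a = pinnedI m a)
          [forall x in [set~ m], ipos f (val x).+1 == (ipos f (val x)).+1].
Proof.
apply: (iffP (adjacent_but_pinnedP m (ipos0 f) (ipos_last f))) => fE a.
- by apply/val_inj; have := fE a (ltn_ord a); rewrite ipos_succ => -[].
- by move=> ak; rewrite (ipos_succ f (Ordinal ak)) fE.
Qed.

Lemma jval_pinnedP (f : {ffun 'I_k -> 'I_n}) (pi : 'S_n) (s : 'S_k)
    (m : 'I_k.+1) :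
  (forall a b, (pi (f a) < pi (f b)) = (s a < s b)) ->
  reflect (forall a, pi (f a) = pinnedI m (s a))
          [forall y in [set~ m], jval pi f (val y).+1 == (jval pi f (val y)).+1].
Proof.
move=> iso; apply: (iffP (adjacent_but_pinnedP m (jval0 f pi) (jval_last f pi))).
- move=> fE a; apply/val_inj; have := fE (s a) (ltn_ord _).
  by rewrite (jval_succ iso) permK => -[].
- by move=> fE b bk; rewrite (jval_succ iso (Ordinal bk)) fE permKV.
Qed.

Lemma contains_pinned (p : bvpat k) (mX mY : 'I_k.+1) (pi : 'S_n) :
  bv_X p = [set~ mX] -> bv_Y p = [set~ mY] ->
  contains p pi = [forall a, pi (pinnedI mX a) == pinnedI mY (bv_sigma p a)].
Proof.
move=> X Y; rewrite /contains X Y; set s := bv_sigma p.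
apply/existsP/forallP.
- case=> f /and4P [_ /forallP ordf /ipos_pinnedP fE].
  have iso a b : (pi (f a) < pi (f b)) = (s a < s b).
    by have /forallP/(_ b)/eqP := ordf a.
  by move/(jval_pinnedP _ iso) => piE a; rewrite -fE piE.
- move=> piE; pose f := [ffun a => pinnedI mX a].
  have fE a : f a = pinnedI mX a by rewrite ffunE.
  have iso a b : (pi (f a) < pi (f b)) = (s a < s b).
    by rewrite !fE !(eqP (piE _)) pinnedI_mono.
  exists f; apply/and4P; split.
  + apply/forallP=> a; apply/forallP=> b; apply/implyP.
    by rewrite !fE pinnedI_mono.
  + by apply/forallP=> a; apply/forallP=> b; rewrite iso.
  + exact/ipos_pinnedP.
  + by apply/(jval_pinnedP _ iso) => a; rewrite fE (eqP (piE a)).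
Qed.

End Pinned.

Lemma perm_extend k n (P Q : 'I_k -> 'I_n) :
  injective P -> injective Q -> exists g : 'S_n, forall a, g (P a) = Q a.
Proof.
move=> injP injQ; have kn : k <= #|'I_n| by rewrite -[k]card_ord (leq_card _ injP).
have transS := ntransitive_weak kn (Sym_trans 'I_n).
have dtuple (R : 'I_k -> 'I_n) : injective R ->
    map_tuple R (ord_tuple k) \in k.-dtuple([set: 'I_n]).
  by move=> injR; rewrite inE map_inj_uniq ?enum_uniq //=.
have [g _ gPQ] := atransP2 transS (dtuple P injP) (dtuple Q injQ).
exists g => a; have := congr1 (fun t => tnth t a) gPQ.
by rewrite /= /n_act tnth_map !tnth_map tnth_ord_tuple.
Qed.

Lemma card_perm_sending k n (P Q : 'I_k -> 'I_n) :
  injective P -> injective Q ->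
  #|[set pi : 'S_n | [forall a, pi (P a) == Q a]]| = (n - k)`!.
Proof.
move=> injP injQ; have [g gPQ] := perm_extend injP injQ.
set B := P @: [set: 'I_k].
have cardCB : #|~: B| = n - k.
  by rewrite cardsCs setCK card_imset // cardsT !card_ord.
(* pi sends P to Q iff pi * g^-1 fixes the range of P pointwise. *)
have -> : [set pi : 'S_n | [forall a, pi (P a) == Q a]] =
          (fun h => h * g)%g @: [set h in perm_on (~: B)].
  apply/setP => pi; rewrite inE; apply/forallP/imsetP.
  - move=> piPQ; exists (pi * g^-1)%g; last by rewrite mulgVK.
    rewrite inE; apply/subsetP => x; rewrite !inE; apply: contraR.
    by move=> /negbNE /imsetP [a _ ->]; rewrite permM (eqP (piPQ a)) -gPQ permK.
  - case=> h; rewrite inE => hB -> a.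
    by rewrite permM (out_perm hB) ?gPQ // !inE negbK imset_f.
by rewrite card_imset ?cardsE ?card_perm ?cardCB //; apply: can_inj (mulgK g).
Qed.

Lemma setC1_of_card k (X : {set 'I_k.+1}) : #|X| = k -> exists m, X = [set~ m].
Proof.
move=> cardX; have /cards1P [m Xm] : #|~: X| == 1.
  by rewrite cardsCs setCK cardX card_ord subSnn.
by exists m; rewrite -Xm setCK.
Qed.

Theorem avoiders_all_but_one_adjacent k n (p : bvpat k) :
  #|bv_X p| = k -> #|bv_Y p| = k -> k <= n -> avoiders n p = n`! - (n - k)`!.
Proof.
move=> /setC1_of_card [mX X] /setC1_of_card [mY Y] kn; rewrite /avoiders.
set C := [set pi : 'S_n |
  [forall a, pi (pinnedI kn mX a) == pinnedI kn mY (bv_sigma p a)]].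
have -> : [set pi : 'S_n | ~~ contains p pi] = ~: C.
  by apply/setP => pi; rewrite !inE (contains_pinned kn _ X Y).
rewrite cardsCs setCK card_Sn card_perm_sending //; first exact: pinnedI_inj.
by move=> a b /pinnedI_inj/perm_inj.
Qed.

Lemma sym_class_card k c (p q : bvpat k) :
  #|bv_X p| = c -> #|bv_Y p| = c -> sym_class p q ->
  #|bv_X q| = c /\ #|bv_Y q| = c.
Proof.
move=> cardX cardY; elim=> [|r _ [hX hY]|r _ [hX hY]|r _ [hX hY]] //=.
all: by rewrite ?card_imset //; apply: rev_ord_inj.
Qed.

Lemma card_set_val_in k (L : seq nat) :
  #|[set x : 'I_k | val x \in L]| = count (mem L) (iota 0 k).
Proof. by rewrite cardsE cardE size_filter -val_enum_ord count_map enumT. Qed.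

Lemma listed_patterns_card :
  all (fun p : bvpat 3 => (#|bv_X p| == 3) && (#|bv_Y p| == 3)) listed_patterns.
Proof. by rewrite /= !card_set_val_in. Qed.

Theorem mainTheorem20 (p : bvpat 3) :
  (exists2 i : nat, i < size listed_patterns &
     sym_class (nth (mkpat3 1%g [::] [::]) listed_patterns i) p) ->
  forall n : nat, 3 <= n -> avoiders n p = n`! - (n - 3)`!.
Proof.
case=> i ilt sym_ip n n3.
have /andP [/eqP cardX /eqP cardY] :=
  all_nthP (mkpat3 1%g [::] [::]) listed_patterns_card i ilt.
have [cardXp cardYp] := sym_class_card cardX cardY sym_ip.
exact: avoiders_all_but_one_adjacent.
Qed.
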